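(* Let $\psi\in L^2(\mu)$ be a non-constant real-valued function with $|\psi|=1$, and let $\hat\psi$ be the orthogonal projection $\phi\mapsto\langle\phi,\psi\rangle\psi$. Then $$\big\|[\mathcal D,\pi(\hat\psi)]\big\| = \big\|K\hat\psi-\hat\psi K\big\| = \sup_{\phi\in L^2(\mu),\,|\phi|=1}\sqrt{\langle\phi,\psi\rangle^2-2\langle\phi,\psi\rangle\langle K\phi,\psi\rangle\langle K\psi,\psi\rangle+\langle K\phi,\psi\rangle^2}.$$
   Context: $\Omega=\{0,1\}^{\mathbb N}$ with the shift $\sigma(x_1,x_2,\dots)=(x_2,x_3,\dots)$; for $a\in\{0,1\}$ and $x\in\Omega$, $ax=(a,x_1,x_2,\dots)$. $\mu$ is the measure of maximal entropy of $\sigma$ (the product of the uniform measure $(1/2,1/2)$ on $\{0,1\}$). $L^2(\mu)$ is the real Hilbert space of square-integrable real functions, with inner product $\langle\cdot,\cdot\rangle$ and norm $|\cdot|$. The Ruelle operator is $L\phi(x)=\frac12(\phi(0x)+\phi(1x))$ and the Koopman operator is $K\phi=\phi\circ\sigma$; both are bounded on $L^2(\mu)$ and $K$ is the adjoint of $L$. On $\mathcal H=L^2(\mu)\times L^2(\mu)$, with norm $|(\phi_1,\phi_2)|^2=|\phi_1|^2+|\phi_2|^2$, the Dirac operator is $\mathcal D(\phi_1,\phi_2)=(K\phi_2,L\phi_1)$, i.e. $\mathcal D=\begin{pmatrix}0&K\\ L&0\end{pmatrix}$, and for a bounded operator $A$ on $L^2(\mu)$, $\pi(A)=\begin{pmatrix}A&0\\0&A\end{pmatrix}$.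 Then $[\mathcal D,\pi(A)]=\mathcal D\pi(A)-\pi(A)\mathcal D=\begin{pmatrix}0&KA-AK\\ LA-AL&0\end{pmatrix}$. $\|\cdot\|$ denotes the operator norm. *)

From HB Require Import structures.
From mathcomp Require Import all_boot all_order all_algebra.
From mathcomp Require Import all_classical all_reals all_analysis.
Set Implicit Arguments. Unset Strict Implicit. Unset Printing Implicit Defensive.
Import Order.TTheory GRing.Theory Num.Theory.
Local Open Scope classical_set_scope.
Local Open Scope ring_scope.

(* Omega = {0,1}^N ; a point x is the sequence (x 0, x 1, ...) = (x_1, x_2, ...) *)
Definition Omega0 := nat -> bool.

Definition cyl (n : nat) (w : Omega0) : set Omega0 :=
  [set x | forall i, (i < n)%N -> x i = w i].
Definition cylinders : set (set Omega0) :=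
  [set A | exists n w, A = cyl n w].

Definition Omega := g_sigma_algebraType cylinders.

Definition shift (x : Omega) : Omega := fun n => x n.+1.
Definition pre (a : bool) (x : Omega) : Omega :=
  fun n => if n is k.+1 then x k else a.

Section L2.
Context {R : realType}.
Variable mu : {measure set Omega -> \bar R}.

Definition L2 (f : Omega -> R) : Prop :=
  measurable_fun setT f /\
  mu.-integrable setT (fun x => ((f x) ^+ 2)%:E).

Definition inner (f g : Omega -> R) : R :=
  fine (\int[mu]_x ((f x * g x)%:E)).
Definition norm2 (f : Omega -> R) : R := Num.sqrt (inner f f).

Definition Kop (f : Omega -> R) : Omega -> R := fun x => f (shift x).
Definition Lop (f : Omega -> R) : Omega -> R :=
  fun x => (f (pre false x) + f (pre true x)) / 2.

Definition rproj (psi : Omega -> R) (f : Omega -> R) : Omega -> R :=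
  fun x => inner f psi * psi x.

Definition opnorm (T : (Omega -> R) -> (Omega -> R)) : R :=
  sup [set norm2 (T f) | f in [set f | L2 f /\ norm2 f = 1]].

Definition Hnorm (p : (Omega -> R) * (Omega -> R)) : R :=
  Num.sqrt (norm2 p.1 ^+ 2 + norm2 p.2 ^+ 2).
Definition opnormH
  (T : (Omega -> R) * (Omega -> R) -> (Omega -> R) * (Omega -> R)) : R :=
  sup [set Hnorm (T p) | p in [set p | L2 p.1 /\ L2 p.2 /\ Hnorm p = 1]].

(* Dirac operator D = [[0, K], [L, 0]] and pi(A) = diag(A, A) *)
Definition Dirac (p : (Omega -> R) * (Omega -> R)) :=
  (Kop p.2, Lop p.1).
Definition piop (A : (Omega -> R) -> (Omega -> R))
  (p : (Omega -> R) * (Omega -> R)) := (A p.1, A p.2).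

Definition commD (A : (Omega -> R) -> (Omega -> R))
  (p : (Omega -> R) * (Omega -> R)) :=
  ((Dirac (piop A p)).1 - (piop A (Dirac p)).1,
   (Dirac (piop A p)).2 - (piop A (Dirac p)).2).

End L2.

(* The cylinder weights 2^-n make [mu] invariant under the transfer operator:
   [\int h + \int h = \int h \o pre false + \int h \o pre true], which is checked
   on cylinders and extended by uniqueness of measures on a pi-system.  As
   [shift \o pre a = id], [mu] is shift invariant, so K is an isometry of L^2(mu),
   and the same identity applied to [K f * g] shows that L is the adjoint of K.
   With a = <f,psi>, b = <Kf,psi> and c = <K psi,psi>, the commutator
   K psihat - psihat K sends f to a K psi - b psi, whose squared norm is
   a^2 - 2abc + b^2: this is the second identity.  The commutator [D, pi(psihat)]
   sends (f1, f2) to (K psihat f2 - psihat K f2, L psihat f1 - psihat L f1); its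
   second entry is minus the adjoint of the first, so it has no larger norm, and
   testing on pairs (0, f2) gives the first identity. *)

From Pilot Require Import Defs.
From HB Require Import structures.
From mathcomp Require Import all_boot all_order all_algebra.
From mathcomp Require Import all_classical all_reals all_analysis.
From mathcomp Require Import measurable_realfun ring lra.
Set Implicit Arguments. Unset Strict Implicit. Unset Printing Implicit Defensive.
Import Order.TTheory GRing.Theory Num.Theory.
Local Open Scope classical_set_scope.
Local Open Scope ring_scope.

Local Notation shift := Defs.shift.

Lemma measurable_cyl n (w : Omega0) : measurable (cyl n w : set Omega).
Proof. by apply: sub_sigma_algebra; exists n, w. Qed.

Lemma cyl0 (w : Omega0) : cyl 0 w = setT.
Proof. by apply/seteqP; split => x //= _ i. Qed.

Lemma measurable_fun_cyl (F : Omega -> Omega) :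
  (forall n w, measurable (F @^-1` cyl n w)) -> measurable_fun setT F.
Proof.
move=> mF; apply: (@measurability _ _ Omega Omega setT F cylinders) => //.
by move=> _ [A [n [w ->]] <-]; rewrite setTI.
Qed.

Lemma preimage_shift_cyl n (w : Omega0) :
  shift @^-1` cyl n w = cyl n.+1 (pre false w) `|` cyl n.+1 (pre true w).
Proof.
apply/seteqP; split => x /=.
  by move=> xw; case x0: (x 0%N); [right|left] => -[|i] //= /xw.
by case=> xw i /(xw i.+1).
Qed.

Lemma preimage_pre_cylS a n (w : Omega0) :
  pre a @^-1` cyl n.+1 w = if a == w 0%N then cyl n (shift w) else set0.
Proof.
apply/seteqP; split => x /=.
  by move=> xw; rewrite -(xw 0%N erefl) eqxx => i /(xw i.+1).
by case: eqP => [->|//] xw [|i] //= /xw.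
Qed.

Lemma measurable_shift : measurable_fun setT shift.
Proof.
by apply: measurable_fun_cyl => n w; rewrite preimage_shift_cyl;
  apply: measurableU; exact: measurable_cyl.
Qed.

Lemma measurable_pre a : measurable_fun setT (pre a).
Proof.
apply: measurable_fun_cyl => -[|n] w.
  by rewrite cyl0 preimage_setT.
rewrite preimage_pre_cylS; case: eqP => _; [exact: measurable_cyl|exact: measurable0].
Qed.

Definition cylinders0 : set (set Omega) := cylinders `|` [set set0].

Lemma measurable_cylinders0 : measurable = <<s cylinders0 >>.
Proof.
apply/seteqP; split; apply: smallest_sub; try exact: smallest_sigma_algebra.
  by move=> A cA; apply: sub_sigma_algebra; left.
by move=> A [cA|->]; [exact: sub_sigma_algebra|exact: sigma_algebra0].
Qed.

Lemma cylinders0_setI_le n m (w v : Omega0) : (n <= m)%N ->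
  cylinders0 (cyl n w `&` cyl m v).
Proof.
move=> nm; have [wv|wv] := pselect (forall i, (i < n)%N -> w i = v i).
  left; exists m, v; apply/seteqP; split => [x [] //|x xv]; split => // i ni.
  by rewrite wv // xv // (leq_trans ni).
right; apply/seteqP; split => // x [xw xv]; apply: wv => i ni.
by rewrite -xw // xv // (leq_trans ni).
Qed.

Lemma setI_closed_cylinders0 : setI_closed cylinders0.
Proof.
move=> A B [[n [w ->]]|->] [[m [v ->]]|->]; rewrite ?set0I ?setI0; try by right.
have [nm|/ltnW mn] := leqP n m; first exact: cylinders0_setI_le.
by rewrite setIC; exact: cylinders0_setI_le.
Qed.

Lemma sqr_le_of_quadratic_ge0 {R : realFieldType} (a b c : R) : 0 <= c ->
  (forall t, 0 <= a + 2 * t * b + t ^+ 2 * c) -> b ^+ 2 <= a * c.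
Proof.
move=> c_ge0 q_ge0; have [c0|c_neq0] := eqVneq c 0.
  rewrite c0 mulr0; have [->|b_neq0] := eqVneq b 0; first by rewrite expr0n.
  have e : 2 * (- (a + 1) / (2 * b)) * b = - (a + 1) by field; rewrite b_neq0.
  by move: (q_ge0 (- (a + 1) / (2 * b))); rewrite e c0 mulr0; lra.
have c_gt0 : 0 < c by rewrite lt_def c_neq0.
have := q_ge0 (- b / c).
have -> : a + 2 * (- b / c) * b + (- b / c) ^+ 2 * c = a - b ^+ 2 / c by field.
by rewrite subr_ge0 ler_pdivrMr.
Qed.

Section L2_space.
Context {R : realType} (mu : {measure set Omega -> \bar R}).
Local Notation L2 := (L2 mu).
Local Notation inner := (inner mu).
Local Notation norm2 := (norm2 mu).

Lemma integrable_L2_mul f g : L2 f -> L2 g ->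
  mu.-integrable setT (fun x => (f x * g x)%:E).
Proof.
move=> [mf f2] [mg g2].
apply: (le_integrable (g := fun x => (f x ^+ 2 + g x ^+ 2)%:E) measurableT).
- by apply/measurable_EFinP; exact: measurable_funM.
- move=> x _ /=; rewrite lee_fin normrM.
  rewrite (ger0_norm (addr_ge0 (sqr_ge0 _) (sqr_ge0 _))).
  rewrite -(real_normK (num_real (f x))) -(real_normK (num_real (g x))).
  have := sqr_ge0 (`|f x| - `|g x|).
  by have := normr_ge0 (f x); have := normr_ge0 (g x); nra.
- exact: integrableD f2 g2.
Qed.

Lemma L2D f g : L2 f -> L2 g -> L2 (fun x => f x + g x).
Proof.
move=> Lf Lg; split; first by apply: measurable_funD; [case: Lf|case: Lg].
have -> : (fun x => ((f x + g x) ^+ 2)%:E) =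
    ((fun x => (f x * f x)%:E) \+
     ((fun x => 2%:E * (f x * g x)%:E) \+ (fun x => (g x * g x)%:E)))%E.
  by apply/funext => x /=; rewrite -EFinM -!EFinD sqrrD; congr EFin; ring.
apply: integrableD => //; first exact: integrable_L2_mul.
apply: integrableD => //; last exact: integrable_L2_mul.
by apply: integrableZl => //; exact: integrable_L2_mul.
Qed.

Lemma L2Z c f : L2 f -> L2 (fun x => c * f x).
Proof.
move=> [mf f2]; split; first exact: measurable_funM.
have -> : (fun x => ((c * f x) ^+ 2)%:E) = (fun x => (c ^+ 2)%:E * (f x ^+ 2)%:E)%E.
  by apply/funext => x; rewrite -EFinM exprMn.
exact: integrableZl.
Qed.

Lemma L2_0 : L2 (fun _ => 0).
Proof.
split=> //; have -> : (fun _ : Omega => ((0 : R) ^+ 2)%:E) = cst 0%E.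
  by apply/funext => x; rewrite expr0n.
exact: integrable0.
Qed.

Lemma innerC f g : inner f g = inner g f.
Proof. by rewrite /inner; under eq_integral do rewrite mulrC. Qed.

Lemma inner0l g : inner (fun _ => 0) g = 0.
Proof. by rewrite /inner; under eq_integral do rewrite mul0r; rewrite integral0. Qed.

Lemma inner_ge0 f : 0 <= inner f f.
Proof. by rewrite fine_ge0// integral_ge0// => x _; rewrite lee_fin -expr2 sqr_ge0. Qed.

Lemma innerDl u v h : L2 u -> L2 v -> L2 h ->
  inner (fun x => u x + v x) h = inner u h + inner v h.
Proof.
move=> Lu Lv Lh; rewrite /inner -[LHS]/(Rintegral mu setT (fun x => (u x + v x) * h x)).
under eq_Rintegral do rewrite mulrDl.
by rewrite RintegralD//; exact: integrable_L2_mul.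
Qed.

Lemma innerZl c u h : L2 u -> L2 h -> inner (fun x => c * u x) h = c * inner u h.
Proof.
move=> Lu Lh; rewrite /inner -[LHS]/(Rintegral mu setT (fun x => c * u x * h x)).
under eq_Rintegral do rewrite -mulrA.
by rewrite RintegralZl//; exact: integrable_L2_mul.
Qed.

Lemma inner_combl a b u v h : L2 u -> L2 v -> L2 h ->
  inner (fun x => a * u x + b * v x) h = a * inner u h + b * inner v h.
Proof. by move=> Lu Lv Lh; rewrite innerDl ?innerZl//; exact: L2Z. Qed.

Lemma inner_combr a b u v h : L2 u -> L2 v -> L2 h ->
  inner h (fun x => a * u x + b * v x) = a * inner h u + b * inner h v.
Proof. by move=> Lu Lv Lh; rewrite innerC inner_combl// !(innerC h). Qed.

Lemma inner_comb_comb a b u v : L2 u -> L2 v ->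
  inner (fun x => a * u x + b * v x) (fun x => a * u x + b * v x) =
  a ^+ 2 * inner u u + 2 * a * b * inner u v + b ^+ 2 * inner v v.
Proof.
move=> Lu Lv; have Lw : L2 (fun x => a * u x + b * v x) by apply: L2D; exact: L2Z.
by rewrite inner_combl// !inner_combr// (innerC v u); ring.
Qed.

Lemma norm2_ge0 f : 0 <= norm2 f.
Proof. exact: sqrtr_ge0. Qed.

Lemma sqr_norm2 f : norm2 f ^+ 2 = inner f f.
Proof. exact/sqr_sqrtr/inner_ge0. Qed.

Lemma norm2Z c f : L2 f -> norm2 (fun x => c * f x) = `|c| * norm2 f.
Proof.
move=> Lf; have Lcf := L2Z c Lf.
by rewrite /norm2 innerZl// innerC innerZl// mulrA -expr2 sqrtrM ?sqr_ge0// sqrtr_sqr.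
Qed.

Lemma sqr_inner_le f g : L2 f -> L2 g -> inner f g ^+ 2 <= inner f f * inner g g.
Proof.
move=> Lf Lg; apply: sqr_le_of_quadratic_ge0; first exact: inner_ge0.
move=> t; have := inner_ge0 (fun x => 1 * f x + t * g x).
by rewrite inner_comb_comb// expr1n !mul1r mulr1.
Qed.

Lemma normr_inner_le f g : L2 f -> L2 g -> `|inner f g| <= norm2 f * norm2 g.
Proof.
move=> Lf Lg; rewrite -ler_sqr ?nnegrE ?mulr_ge0 ?norm2_ge0//.
by rewrite real_normK ?num_real// exprMn !sqr_norm2 sqr_inner_le.
Qed.

Lemma norm2_0 : norm2 (fun _ => 0) = 0.
Proof. by rewrite /norm2 inner0l sqrtr0. Qed.

Lemma Hnorm_norm2_0r f g : norm2 g = 0 -> Hnorm mu (f, g) = norm2 f.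
Proof.
by move=> g0; rewrite /Hnorm /= g0 expr0n addr0 sqrtr_sqr ger0_norm ?norm2_ge0.
Qed.

End L2_space.

Lemma adde_self_inj {R : realFieldType} (x y : \bar R) : (x + x = y + y)%E -> x = y.
Proof.
by case: x y => [x| |] [y| |] //=; rewrite -?EFinD// => -[] xy; congr EFin; lra.
Qed.

Section transfer_invariance.
Context {R : realType} (mu : {measure set Omega -> \bar R}).
Hypothesis mu_cyl : forall n w, mu (cyl n w) = ((2 : R) ^- n)%:E.
Local Notation L2 := (L2 mu).
Local Notation inner := (inner mu).

(* The pushforward is a measure only given the measurability of [pre a], which
   canonical structure inference cannot find, hence the explicit instance. *)
Let mu_pre a : {measure set Omega -> \bar R} :=
  measure_function_pushforward__canonical__measure_function_Measure
    mu (measurable_pre a).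

Let mu_setT : mu setT = 1%:E.
Proof. by rewrite -(cyl0 (fun=> false)) mu_cyl expr0 invr1. Qed.

Lemma measure_add_pre A : measurable A ->
  measure_add mu mu A = measure_add (mu_pre false) (mu_pre true) A.
Proof.
have agree B : cylinders0 B ->
    measure_add mu mu B = measure_add (mu_pre false) (mu_pre true) B.
  rewrite !measure_addE /= /pushforward; case=> [[[|n] [w ->]]|->].
  - by rewrite cyl0 mu_setT.
  - have halves : ((2 : R) ^- n.+1)%:E + ((2 : R) ^- n.+1)%:E = ((2 : R) ^- n)%:E.
      by rewrite -EFinD exprS invfM; congr EFin; field; exact: expf_neq0.
    rewrite !preimage_pre_cylS !mu_cyl halves.
    by case: (w 0%N); rewrite /= measure0 mu_cyl ?adde0 ?add0e.
  - by rewrite !preimage_set0 !measure0 adde0.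
apply: (measure_unique cylinders0 (fun=> setT) measurable_cylinders0
  setI_closed_cylinders0 _ _ _ _ agree).
- by move=> _; left; exists 0%N, (fun=> false); rewrite cyl0.
- by rewrite bigcup_const.
- move=> _; change (measure_add mu mu setT < +oo)%E.
  by rewrite measure_addE mu_setT -EFinD ltry.
Qed.

Lemma ge0_integral_pre (h : Omega -> \bar R) :
  measurable_fun setT h -> (forall x, 0 <= h x)%E ->
  (\int[mu]_x h x + \int[mu]_x h x =
   \int[mu]_x h (pre false x) + \int[mu]_x h (pre true x))%E.
Proof.
move=> mh h0; rewrite -ge0_integral_measure_add//.
rewrite (eq_measure_integral (measure_add (mu_pre false) (mu_pre true))); last first.
  by move=> A mA _; exact: measure_add_pre.
rewrite ge0_integral_measure_add//.
by rewrite !(ge0_integral_pushforward (measurable_pre _)).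
Qed.

Lemma integrable_pre a (u : Omega -> \bar R) :
  mu.-integrable setT u -> mu.-integrable setT (u \o pre a).
Proof.
move=> /integrableP[mu' int_u]; apply/integrableP; split.
  exact: measurableT_comp mu' (measurable_pre a).
have mabs := measurableT_comp (@abse_measurable R setT) mu'.
have := ge0_integral_pre mabs (fun x => abse_ge0 (u x)) => e.
apply: le_lt_trans (_ : _ <= \int[mu]_x `|u x| + \int[mu]_x `|u x|)%E _.
  rewrite e; case: a; [apply: leeDr|apply: leeDl];
  by apply: integral_ge0 => x _; exact: abse_ge0.
by rewrite lte_add_pinfty.
Qed.

Lemma integral_pre (u : Omega -> \bar R) : mu.-integrable setT u ->
  (\int[mu]_x u x + \int[mu]_x u x =
   \int[mu]_x u (pre false x) + \int[mu]_x u (pre true x))%E.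
Proof.
move=> iu; have mu' := measurable_int mu iu.
have iu_pre a : (mu_pre a).-integrable setT u.
  by have := integrable_pushforward (measurable_pre a) mu'
    (integrable_pre a iu) measurableT.
rewrite -integral_measure_add//.
rewrite (eq_measure_integral (measure_add (mu_pre false) (mu_pre true))); last first.
  by move=> A mA _; exact: measure_add_pre.
rewrite integral_measure_add//.
by rewrite !(integral_pushforward (measurable_pre _) mu' (integrable_pre _ iu)).
Qed.

Lemma Rintegral_pre (u : Omega -> R) : mu.-integrable setT (EFin \o u) ->
  Rintegral mu setT (u \o pre false) + Rintegral mu setT (u \o pre true) =
  2 * Rintegral mu setT u.
Proof.
move=> iu; have fin_u := integrable_fin_num measurableT iu.
have fin_pre a := integrable_fin_num measurableT (integrable_pre a iu).
transitivity (fine (\int[mu]_x (EFin \o u) (pre false x) +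
                    \int[mu]_x (EFin \o u) (pre true x))%E).
  by rewrite fineD//; exact: fin_pre.
by rewrite -(integral_pre iu) fineD// -mulr2n mulr_natl.
Qed.

Lemma ge0_integral_shift (h : Omega -> \bar R) :
  measurable_fun setT h -> (forall x, 0 <= h x)%E ->
  (\int[mu]_x h (shift x) = \int[mu]_x h x)%E.
Proof.
move=> mh h0; have mhs := measurableT_comp mh measurable_shift.
apply: adde_self_inj; exact: (ge0_integral_pre mhs (fun x => h0 (shift x))).
Qed.

Lemma L2_pre a f : L2 f -> L2 (f \o pre a).
Proof.
case=> mf f2; split; first exact: measurableT_comp mf (measurable_pre a).
by have := integrable_pre a f2.
Qed.

Lemma LopE (f : Omega -> R) :
  Lop f = fun x => 2^-1 * f (pre false x) + 2^-1 * f (pre true x).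
Proof. by apply/funext => x; rewrite /Lop mulrC mulrDr. Qed.

Lemma L2_Lop f : L2 f -> L2 (Lop f).
Proof. by move=> Lf; rewrite LopE; apply: L2D; apply: L2Z; exact: L2_pre. Qed.

Lemma L2_Kop f : L2 f -> L2 (Kop f).
Proof.
case=> mf /integrableP[mf2 f2].
split; first exact: measurableT_comp mf measurable_shift.
apply/integrableP; split; first exact: measurableT_comp mf2 measurable_shift.
rewrite (ge0_integral_shift (h := fun x => `|(f x ^+ 2)%:E|)%E)//.
exact: measurableT_comp (@abse_measurable R setT) mf2.
Qed.

Lemma inner_Kop_Kop f : measurable_fun setT f -> inner (Kop f) (Kop f) = inner f f.
Proof.
move=> mf; rewrite /inner (ge0_integral_shift (h := fun x => (f x * f x)%:E))//.
- by apply/measurable_EFinP; exact: measurable_funM.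
- by move=> x; rewrite lee_fin -expr2 sqr_ge0.
Qed.

Lemma inner_Kop_l f g : L2 f -> L2 g -> inner (Kop f) g = inner f (Lop g).
Proof.
move=> Lf Lg; have Lg_pre a := L2_pre a Lg.
have e : inner f (fun x => g (pre false x)) + inner f (fun x => g (pre true x)) =
    2 * inner (Kop f) g := Rintegral_pre (integrable_L2_mul (L2_Kop Lf) Lg).
by rewrite LopE inner_combr//; [move: e; lra|exact: Lg_pre..].
Qed.

End transfer_invariance.

Section operator_norm.
Context {R : realType} (mu : {measure set Omega -> \bar R}).
Local Notation L2 := (L2 mu).
Local Notation inner := (inner mu).
Local Notation norm2 := (norm2 mu).
Variables (T : (Omega -> R) -> Omega -> R) (B : R).
Hypothesis L2T : forall f, L2 f -> L2 (T f).
Hypothesis TZ : forall c f, L2 f -> T (fun x => c * f x) = (fun x => c * T f x).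
Hypothesis T_bounded : forall f, L2 f -> norm2 (T f) <= B * norm2 f.

Let has_ubound_opnorm :
  has_ubound [set norm2 (T f) | f in [set f | L2 f /\ norm2 f = 1]].
Proof. by exists B => _ [f [Lf f1] <-]; rewrite -[B]mulr1 -f1 T_bounded. Qed.

Lemma opnorm_ge0 : 0 <= opnorm mu T.
Proof.
have [[x Sx]|S0] :=
  pselect ([set norm2 (T f) | f in [set f | L2 f /\ norm2 f = 1]] !=set0).
  apply: le_trans (ub_le_sup has_ubound_opnorm Sx).
  by case: Sx => f _ <-; exact: norm2_ge0.
rewrite /opnorm (_ : [set _ | _ in _] = set0) ?sup0//.
by apply/seteqP; split=> // x Sx; apply: S0; exists x.
Qed.

Lemma norm2_le_opnorm f : L2 f -> norm2 (T f) <= opnorm mu T * norm2 f.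
Proof.
move=> Lf; have [f0|f_neq0] := eqVneq (norm2 f) 0.
  by have := T_bounded Lf; rewrite f0 !mulr0.
have f_gt0 : 0 < norm2 f by rewrite lt_def f_neq0 norm2_ge0.
have Lg : L2 (fun x => (norm2 f)^-1 * f x) by exact: L2Z.
have g1 : norm2 (fun x => (norm2 f)^-1 * f x) = 1.
  by rewrite norm2Z// ger0_norm ?invr_ge0 ?norm2_ge0// mulVf.
have := ub_le_sup has_ubound_opnorm (ex_intro2 _ _ _ (conj Lg g1) erefl).
rewrite TZ// norm2Z; last exact: L2T.
by rewrite ger0_norm ?invr_ge0 ?norm2_ge0// mulrC ler_pdivrMr.
Qed.

Lemma norm2_adjoint_le S g : L2 g -> L2 (S g) ->
  (forall f, L2 f -> `|inner f (S g)| = `|inner (T f) g|) ->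
  norm2 (S g) <= opnorm mu T * norm2 g.
Proof.
move=> Lg LSg adj.
have : norm2 (S g) ^+ 2 <= norm2 (S g) * (opnorm mu T * norm2 g).
  rewrite sqr_norm2 -[inner _ _]ger0_norm ?inner_ge0// adj//.
  apply: le_trans (normr_inner_le (L2T LSg) Lg) _.
  by rewrite mulrA [_ * opnorm _ _]mulrC ler_wpM2r ?norm2_ge0 ?norm2_le_opnorm.
have := norm2_ge0 mu (S g); have := mulr_ge0 opnorm_ge0 (norm2_ge0 mu g); nra.
Qed.

End operator_norm.

Section commutator.
Context {R : realType} (mu : {measure set Omega -> \bar R}).
Hypothesis mu_cyl : forall n w, mu (cyl n w) = ((2 : R) ^- n)%:E.
Variable psi : Omega -> R.
Hypotheses (L2psi : L2 mu psi) (psi_unit : norm2 mu psi = 1).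
Local Notation L2 := (L2 mu).
Local Notation inner := (inner mu).
Local Notation norm2 := (norm2 mu).

Definition commK f := Kop (rproj mu psi f) - rproj mu psi (Kop f).
Definition commL f := Lop (rproj mu psi f) - rproj mu psi (Lop f).

Let inner_psi_psi : inner psi psi = 1.
Proof. by rewrite -sqr_norm2 psi_unit expr1n. Qed.

Let L2Kpsi : L2 (Kop psi) := L2_Kop mu_cyl L2psi.
Let L2Lpsi : L2 (Lop psi) := L2_Lop mu_cyl L2psi.

Let inner_Kpsi_Kpsi : inner (Kop psi) (Kop psi) = 1.
Proof. by rewrite (inner_Kop_Kop mu_cyl (proj1 L2psi)). Qed.

Lemma commKE f :
  commK f = fun x => inner f psi * Kop psi x + - inner (Kop f) psi * psi x.
Proof. by rewrite /commK /rproj !fctE; apply/funext => x /=; rewrite mulNr. Qed.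

Lemma commLE f :
  commL f = fun x => inner f psi * Lop psi x + - inner (Lop f) psi * psi x.
Proof. by rewrite /commL /rproj !fctE; apply/funext => x; rewrite /Lop /=; ring. Qed.

Lemma L2_commK f : L2 (commK f).
Proof. by rewrite commKE; apply: L2D; exact: L2Z. Qed.

Lemma L2_commL f : L2 (commL f).
Proof. by rewrite commLE; apply: L2D; exact: L2Z. Qed.

Lemma commKZ c f : L2 f -> commK (fun x => c * f x) = fun x => c * commK f x.
Proof.
move=> Lf; have cKf : Kop (fun x => c * f x) = fun x => c * Kop f x by [].
have LKf := L2_Kop mu_cyl Lf.
by rewrite !commKE cKf !innerZl//; apply/funext => x; ring.
Qed.

Lemma sqr_norm2_commK f : L2 f ->
  norm2 (commK f) ^+ 2 = inner f psi ^+ 2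
    - 2 * inner f psi * inner (Kop f) psi * inner (Kop psi) psi
    + inner (Kop f) psi ^+ 2.
Proof.
move=> Lf; rewrite sqr_norm2 commKE inner_comb_comb//.
by rewrite inner_Kpsi_Kpsi inner_psi_psi; ring.
Qed.

Lemma norm2_commK_le f : L2 f -> norm2 (commK f) <= 2 * norm2 f.
Proof.
move=> Lf; have LKf := L2_Kop mu_cyl Lf.
rewrite -ler_sqr ?nnegrE ?mulr_ge0 ?norm2_ge0// sqr_norm2_commK// exprMn sqr_norm2.
have := sqr_inner_le Lf L2psi; have := sqr_inner_le LKf L2psi.
have := sqr_inner_le L2Kpsi L2psi.
rewrite (inner_Kop_Kop mu_cyl (proj1 Lf)) inner_Kpsi_Kpsi inner_psi_psi !mulr1.
set a := inner f psi; set b := inner (Kop f) psi; set c := inner (Kop psi) psi.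
by have := sqr_ge0 (a * c + b); have := inner_ge0 mu f; nra.
Qed.

Lemma inner_commL f g : L2 f -> L2 g -> inner f (commL g) = - inner (commK f) g.
Proof.
move=> Lf Lg; have LKf := L2_Kop mu_cyl Lf; have LLg := L2_Lop mu_cyl Lg.
rewrite commKE commLE inner_combl// inner_combr//.
rewrite !(inner_Kop_l mu_cyl)// [inner psi g]innerC [inner (Lop g) _]innerC; ring.
Qed.

Lemma norm2_commK_le_opnorm f : L2 f ->
  norm2 (commK f) <= opnorm mu commK * norm2 f.
Proof.
apply: (norm2_le_opnorm (B := 2)).
- by move=> g _; exact: L2_commK.
- exact: commKZ.
- exact: norm2_commK_le.
Qed.

Lemma norm2_commL_le g : L2 g -> norm2 (commL g) <= opnorm mu commK * norm2 g.
Proof.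
move=> Lg; apply: (norm2_adjoint_le (B := 2)) => //.
- by move=> f _; exact: L2_commK.
- exact: commKZ.
- exact: norm2_commK_le.
- exact: L2_commL.
- by move=> f Lf; rewrite inner_commL// normrN.
Qed.

Lemma Hnorm_commD_le p : L2 p.1 -> L2 p.2 ->
  Hnorm mu (commD (rproj mu psi) p) <= opnorm mu commK * Hnorm mu p.
Proof.
case: p => f g /= Lf Lg; have M_ge0 : 0 <= opnorm mu commK.
  exact: (opnorm_ge0 (B := 2)) norm2_commK_le.
rewrite /Hnorm /= -[opnorm _ _]ger0_norm// -sqrtr_sqr -sqrtrM ?sqr_ge0//.
apply: ler_wsqrtr; have := norm2_commK_le_opnorm Lg; have := norm2_commL_le Lf.
have := norm2_ge0 mu (commK g); have := norm2_ge0 mu (commL f).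
by have := norm2_ge0 mu f; have := norm2_ge0 mu g; nra.
Qed.

Lemma opnormH_commD : opnormH mu (commD (rproj mu psi)) = opnorm mu commK.
Proof.
have unit_0l f : L2 f -> norm2 f = 1 ->
    [set p | L2 p.1 /\ L2 p.2 /\ Hnorm mu p = 1] (fun _ => 0, f).
  move=> Lf f1; split; first exact: L2_0.
  by rewrite /Hnorm /= norm2_0 f1 expr0n expr1n add0r sqrtr1.
have commD_0l f : Hnorm mu (commD (rproj mu psi) (fun _ => 0, f)) = norm2 (commK f).
  apply: Hnorm_norm2_0r; apply/eqP; rewrite eq_le norm2_ge0 andbT.
  by have := norm2_commL_le (L2_0 mu); rewrite norm2_0 mulr0.
rewrite /opnormH; set SH := (X in sup X = _).
have SH_ub : ubound SH (opnorm mu commK).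
  move=> _ [p [Lp1 [Lp2 p1]] <-]; rewrite -[opnorm _ _]mulr1 -p1.
  exact: Hnorm_commD_le.
apply/le_anti/andP; split; apply: ge_sup => //.
- by exists (norm2 (commK psi)), (fun _ => 0, psi); [exact: unit_0l|exact: commD_0l].
- by exists (norm2 (commK psi)), psi.
- move=> _ [f [Lf f1] <-]; rewrite -commD_0l.
  apply: ub_le_sup; first by exists (opnorm mu commK).
  by exists (fun _ => 0, f) => //; exact: unit_0l.
Qed.

Lemma opnorm_commKE : opnorm mu commK =
  sup [set Num.sqrt (inner f psi ^+ 2
                     - 2 * inner f psi * inner (Kop f) psi * inner (Kop psi) psi
                     + inner (Kop f) psi ^+ 2)
      | f in [set f | L2 f /\ norm2 f = 1]].
Proof.
congr sup; apply: eq_imagel => f [Lf _].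
by rewrite -sqr_norm2_commK// sqrtr_sqr ger0_norm ?norm2_ge0.
Qed.

End commutator.

Theorem theorem1p8 (R : realType) (mu : {measure set Omega -> \bar R})
  (hmu : forall (n : nat) (w : Omega0), mu (cyl n w) = ((2 : R) ^- n)%:E)
  (psi : Omega -> R)
  (hpsi : L2 mu psi)
  (hnc : ~ (exists c : R, {ae mu, forall x, psi x = c}))
  (hn1 : norm2 mu psi = 1) :
  opnormH mu (commD (rproj mu psi)) =
    opnorm mu (fun f => Kop (rproj mu psi f) - rproj mu psi (Kop f)) /\
  opnorm mu (fun f => Kop (rproj mu psi f) - rproj mu psi (Kop f)) =
    sup [set Num.sqrt (inner mu f psi ^+ 2
                       - 2 * inner mu f psi * inner mu (Kop f) psi
                           * inner mu (Kop psi) psi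
                       + inner mu (Kop f) psi ^+ 2)
        | f in [set f | L2 mu f /\ norm2 mu f = 1]].
Proof.
by split; [apply: opnormH_commD|apply: opnorm_commKE].
Qed.
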